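(* For every simple game $v$ on $n\ge 2$ players and every player $i$ that is not a dictator in $v$, we have $\mathrm{PGI}_i(v)\le\frac12$ and $\mathrm{DP}_i(v)\le\frac12$.
   Context: A simple game on $N=\{1,\dots,n\}$ is a surjective, monotone map $v\colon 2^N\to\{0,1\}$. A coalition $S$ is winning if $v(S)=1$; it is minimal winning if it is winning and all proper subsets are losing. Player $j$ is a null player if $v(S)=v(S\cup\{j\})$ for all $S\subseteq N\setminus\{j\}$; player $i$ is a dictator if $v(\{i\})=1$ and all other players are null players. Public Good index: $\mathrm{PGI}_i(v)=m_i/\sum_{j\in N}m_j$, where $m_j$ is the number of minimal winning coalitions containing $j$. Deegan–Packel index: $\mathrm{DP}_i(v)=d_i/\sum_{j\in N}d_j$, where $d_j=\sum_{S\ni j,\ S\text{ minimal winning}}\frac{1}{|S|}$. *)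

From HB Require Import structures.
From mathcomp Require Import all_boot all_order all_algebra.
Set Implicit Arguments. Unset Strict Implicit. Unset Printing Implicit Defensive.
Import Order.TTheory GRing.Theory Num.Theory.

Section Games.
Variable n : nat.
Implicit Types (v : {set 'I_n} -> bool) (S T : {set 'I_n}) (i j : 'I_n).

Definition surjective_game v : Prop :=
  (exists S, v S = true) /\ (exists S, v S = false).

Definition monotone_game v : Prop :=
  forall S T, S \subset T -> v S -> v T.

Definition simple_game v : Prop := surjective_game v /\ monotone_game v.

Definition winning v S : bool := v S.

Definition minimal_winning v S : bool :=
  v S && [forall T : {set 'I_n}, (T \proper S) ==> ~~ v T].

Definition null_player v j : Prop :=
  forall S, j \notin S -> v S = v (j |: S).

Definition dictator v i : Prop :=
  v [set i] /\ forall j, j != i -> null_player v j.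

Definition mwc_count v j : nat :=
  #|[set S : {set 'I_n} | minimal_winning v S & j \in S]|.

Definition PGI v i : rat :=
  (mwc_count v i)%:R / (\sum_(j < n) mwc_count v j)%:R.

Definition dp_weight v j : rat :=
  \sum_(S : {set 'I_n} | minimal_winning v S && (j \in S)) (#|S|%:R)^-1.

Definition DP v i : rat := dp_weight v i / \sum_(j < n) dp_weight v j.

End Games.

(** Both indices have the form [w_i / \sum_j w_j] with
    [w_j = \sum_(S minimal winning, j \in S) f |S|], and exchanging the sums
    gives [\sum_j w_j = \sum_(S minimal winning) |S| f |S|].  Every minimal
    winning coalition containing [i] other than [{i}] has at least two members,
    so it contributes at least twice its share to the total.  If [{i}] itself
    is minimal winning, then, [i] not being a dictator, some other player is
    pivotal for a coalition without [i], which yields a minimal winning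
    coalition [T] avoiding [i]; the term of [T] compensates that of [{i}] as
    soon as [f 1 <= |T| f |T|]. *)
From HB Require Import structures.
From mathcomp Require Import all_boot all_order all_algebra.
Set Implicit Arguments. Unset Strict Implicit. Unset Printing Implicit Defensive.
Import Order.TTheory GRing.Theory Num.Theory.
Local Open Scope ring_scope.

Lemma ler_sum_compensate (R : numDomainType) (I : finType) (P : pred I)
    (F G : I -> R) (x : I) :
  (forall y, P y -> y != x -> F y <= G y) ->
  (P x -> exists2 y, P y & (y != x) /\ F x + F y <= G x + G y) ->
  \sum_(y | P y) F y <= \sum_(y | P y) G y.
Proof.
move=> le_FG compensate; have [Px|nPx] := boolP (P x); last first.
  by apply: ler_sum => y Py; apply: le_FG => //; apply: contraNneq nPx => <-.
have [y Py [yx le_xy]] := compensate Px.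
have Pyx : P y && (y != x) by rewrite Py yx.
rewrite (bigD1 x) // [X in _ <= X](bigD1 x) //= (bigD1 y Pyx) /=.
rewrite [X in _ <= _ + X](bigD1 y Pyx) /= !addrA lerD //.
by apply: ler_sum => z /andP[/andP[Pz zx] _]; apply: le_FG.
Qed.

Lemma ler_ratio_half (R : numFieldType) (a b : R) :
  0 <= a -> 2 * a <= b -> a / b <= 1 / 2.
Proof.
move=> a_ge0 le_2ab; have [->|b_neq0] := eqVneq b 0.
  by rewrite invr0 mulr0 divr_ge0.
have b_gt0 : 0 < b by rewrite lt0r b_neq0 (le_trans _ le_2ab) ?mulr_ge0.
by rewrite ler_pdivrMr // mul1r ler_pdivlMl.
Qed.

Section MinimalWinning.

Variables (n : nat) (v : {set 'I_n} -> bool).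

Lemma minset_minimal_winning S : minset v S -> minimal_winning v S.
Proof.
move/minsetP=> [vS minS]; rewrite /minimal_winning vS /=.
apply/forallP => T; apply/implyP => ltTS; apply/negP => vT.
by move: ltTS (minS T vT (proper_sub ltTS)) => /[swap] ->; rewrite properxx.
Qed.

Hypothesis v_simple : simple_game v.

Lemma simple_game_set0 : v set0 = false.
Proof.
have [[_ [S vS]] mono] := v_simple.
by apply/negP => v0; move: (mono _ _ (sub0set S) v0); rewrite vS.
Qed.

Lemma minimal_winning_card_gt0 S : minimal_winning v S -> (0 < #|S|)%N.
Proof.
case/andP=> vS _; rewrite card_gt0; apply: contraTneq vS => ->.
by rewrite simple_game_set0.
Qed.

Lemma minimal_winning_avoid i :
  v [set i] -> ~ dictator v i -> exists2 T, minimal_winning v T & i \notin T.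
Proof.
move=> vi not_dict; have [_ mono] := v_simple.
have [/existsP[j /andP[ji]]|] := boolP
  [exists j, (j != i) && ~~ [forall S : {set 'I_n}, (j \notin S) ==> (v S == v (j |: S))]].
  rewrite negb_forall => /existsP[S]; rewrite negb_imply => /andP[jS vSj].
  have vS_false : v S = false.
    by apply: contraNF vSj => vS; rewrite vS (mono _ _ (subsetUr [set j] S) vS).
  have vjS : v (j |: S) by apply: contraNT vSj => /negbTE ->; rewrite vS_false.
  have iS : i \notin S.
    by apply: contraFN vS_false => iS; apply: mono vi; rewrite sub1set.
  have [T minT TjS] := minset_exists vjS.
  exists T; first exact: minset_minimal_winning.
  apply: contraNN iS => /(subsetP TjS); rewrite !inE.
  by rewrite eq_sym (negbTE ji).
rewrite negb_exists => /forallP null_others; exfalso; apply: not_dict.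
split=> // j ji S jS; move: (null_others j); rewrite ji negbK.
by move=> /forallP/(_ S)/implyP/(_ jS)/eqP.
Qed.

End MinimalWinning.

Section WeightedIndex.

Variables (R : numFieldType) (n : nat) (v : {set 'I_n} -> bool) (f : nat -> R).

Definition mwc_weight j : R :=
  \sum_(S : {set 'I_n} | minimal_winning v S && (j \in S)) f #|S|.

Lemma sum_mwc_weight :
  \sum_(j < n) mwc_weight j =
  \sum_(S : {set 'I_n} | minimal_winning v S) #|S|%:R * f #|S|.
Proof.
under eq_bigr do rewrite /mwc_weight big_mkcondr.
rewrite exchange_big /=; apply: eq_bigr => S _.
by rewrite -big_mkcond /= sumr_const mulr_natl.
Qed.

Hypothesis f_ge0 : forall k, 0 <= f k.
Hypothesis f1_le : forall k, (0 < k)%N -> f 1 <= k%:R * f k.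

Lemma mwc_weight_le_half i :
  simple_game v -> ~ dictator v i -> 2 * mwc_weight i <= \sum_(j < n) mwc_weight j.
Proof.
move=> v_simple not_dict.
rewrite sum_mwc_weight /mwc_weight big_mkcondr mulr_sumr /=.
apply: (@ler_sum_compensate _ _ _ _ _ [set i]).
  move=> S minS Si; case: ifP => iS; last by rewrite mulr0 mulr_ge0.
  rewrite ler_wpM2r // (ler_nat _ 2).
  have ltiS : [set i] \proper S by rewrite properEneq eq_sym Si sub1set iS.
  by rewrite -(cards1 i) proper_card.
move=> /andP[vi _].
have [T minT iT] := minimal_winning_avoid v_simple vi not_dict.
exists T => //; split; first by apply: contraNneq iT => ->; rewrite set11.
rewrite set11 (negbTE iT) cards1 mulr0 addr0 mul1r mulr_natl mulr2n lerD //.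
exact: f1_le (minimal_winning_card_gt0 v_simple minT).
Qed.

End WeightedIndex.

Lemma mwc_count_weight n (v : {set 'I_n} -> bool) j :
  (mwc_count v j)%:R = mwc_weight v (fun _ => 1 : rat) j.
Proof.
rewrite /mwc_count -sum1_card natr_sum.
by apply: eq_bigl => S; rewrite inE.
Qed.

Theorem theorem4 (n : nat) (v : {set 'I_n} -> bool) (i : 'I_n) :
  (2 <= n)%N -> simple_game v -> ~ dictator v i ->
  PGI v i <= 1 / 2 /\ DP v i <= 1 / 2.
Proof.
move=> _ v_simple not_dict; split.
- rewrite /PGI natr_sum; under eq_bigr do rewrite mwc_count_weight.
  rewrite mwc_count_weight; apply: ler_ratio_half.
    by apply: sumr_ge0.
  by apply: mwc_weight_le_half => // k k_gt0; rewrite mulr1 ler1n.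
- (* [dp_weight v] is [mwc_weight v (fun k => k%:R^-1)] by conversion. *)
  apply: ler_ratio_half; first by apply: sumr_ge0 => S _; rewrite invr_ge0.
  apply: (@mwc_weight_le_half _ _ _ (fun k => k%:R^-1)) => //.
    by move=> k; rewrite invr_ge0.
  by move=> k k_gt0; rewrite invr1 divff // pnatr_eq0 -lt0n.
Qed.
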